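(* Let $n\ge1$, identify $\mathbb{R}^{n+1}=\mathbb{R}^n\times\mathbb{R}$, let $R>0$, let $K\subset\mathbb{R}^{n+1}$ be the closed ball of radius $R$ centered at the origin, and let $f\colon\mathbb{R}^n\to(0,\infty)$ be continuous with $|x|^2+f(x)^2>R^2$ for all $x\in\mathbb{R}^n$ (so that $K$ is disjoint from the epigraph $L=\{(x,y)\mid f(x)\le y\}$). Then for every $x\in\mathbb{R}^n$ there is exactly one $y\in\mathbb{R}$ such that $d((x,y),K)=d((x,y),L)$.
   Context: $d(p,A)=\inf\{|p-q|\mid q\in A\}$ (Euclidean distance). *)

From HB Require Import structures.
From mathcomp Require Import all_boot all_order all_algebra.
From mathcomp Require Import all_classical all_reals all_analysis.
Set Implicit Arguments. Unset Strict Implicit. Unset Printing Implicit Defensive.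
Import Order.TTheory GRing.Theory Num.Theory.
Local Open Scope classical_set_scope.
Local Open Scope ring_scope.

Definition sqnorm (R : realType) (n : nat) (x : 'rV[R]_n) : R :=
  \sum_(i < n) x ord0 i ^+ 2.

Definition edist (R : realType) (n : nat) (p q : 'rV[R]_n * R) : R :=
  Num.sqrt (sqnorm (p.1 - q.1) + (p.2 - q.2) ^+ 2).

Definition dist_set (R : realType) (n : nat) (p : 'rV[R]_n * R)
  (A : set ('rV[R]_n * R)) : R :=
  inf [set d | exists2 q, A q & d = edist p q].

Definition cball0 (R : realType) (n : nat) (r : R) : set ('rV[R]_n * R) :=
  [set p | edist p (0, 0) <= r].

Definition epigraph (R : realType) (n : nat) (f : 'rV[R]_n -> R)
  : set ('rV[R]_n * R) :=
  [set p | f p.1 <= p.2].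

(* Fix x and let g(y) and h(y) be the distances from (x, y) to the ball K and
   to the epigraph L.  Then g(y) = max(0, |(x, y)| - r), while h is continuous,
   nonincreasing, zero for y >= f(x) and positive below f(x).  Existence: h - g
   changes sign between y = -|x|^2/r and y = f(x).  Uniqueness: an equidistant
   point lies outside K, so h(y) = |(x, y)| - r there.  As L lies in the upper
   half-space, h(y)^2 - y^2 is nonincreasing as well; for two equidistant
   heights y1 < y2 the two monotonicities force |(x, y1)| = |(x, y2)|, i.e.
   y1 = -y2 < 0, and then h(0)^2 <= h(y1)^2 - y1^2 < h(y2)^2 <= h(0)^2. *)

From Pilot Require Import Defs.
From HB Require Import structures.
From mathcomp Require Import all_boot all_order all_algebra.
From mathcomp Require Import all_classical all_reals all_analysis.
From mathcomp Require Import ring lra.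
Import Order.TTheory GRing.Theory Num.Theory numFieldNormedType.Exports.
Set Implicit Arguments. Unset Strict Implicit. Unset Printing Implicit Defensive.
Local Open Scope classical_set_scope.
Local Open Scope ring_scope.

(* MathComp-Analysis also has an [edist] (the extended pseudometric distance). *)
Local Notation edist := Defs.edist.

Section CauchySchwarz.
Variable R : realFieldType.

Lemma cauchy_schwarz_step (a b S A B : R) : 0 <= A -> 0 <= B -> S ^+ 2 <= A * B ->
  (a * b + S) ^+ 2 <= (a ^+ 2 + A) * (b ^+ 2 + B).
Proof.
move=> A_ge0 B_ge0 SAB.
suff: 2 * a * b * S <= a ^+ 2 * B + b ^+ 2 * A by nra.
have [A0|A_neq0] := eqVneq A 0.
  move: SAB; rewrite A0 mul0r => S_le0.
  have -> : S = 0 by apply/eqP; rewrite -sqrf_eq0 eq_le S_le0 sqr_ge0.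
  by nra.
have A_gt0 : 0 < A by rewrite lt_def A_neq0 A_ge0.
have : 0 <= A * (a ^+ 2 * B + b ^+ 2 * A - 2 * a * b * S).
  have -> : A * (a ^+ 2 * B + b ^+ 2 * A - 2 * a * b * S)
          = (b * A - a * S) ^+ 2 + a ^+ 2 * (A * B - S ^+ 2) by ring.
  by rewrite addr_ge0 ?sqr_ge0 // mulr_ge0 ?sqr_ge0 ?subr_ge0.
by rewrite pmulr_rge0 // subr_ge0.
Qed.

Lemma cauchy_schwarz (I : Type) (s : seq I) (u v : I -> R) :
  (\sum_(i <- s) u i * v i) ^+ 2 <= (\sum_(i <- s) u i ^+ 2) * (\sum_(i <- s) v i ^+ 2).
Proof.
elim: s => [|i s IHs]; first by rewrite !big_nil expr0n mul0r.
by rewrite !big_cons cauchy_schwarz_step ?sumr_ge0 // => j _; rewrite sqr_ge0.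
Qed.

End CauchySchwarz.

Lemma sqrtr_le (R : rcfType) (a b : R) : 0 <= b -> (Num.sqrt a <= b) = (a <= b ^+ 2).
Proof. by move=> b_ge0; rewrite -ler_sqrt ?sqr_ge0 // sqrtr_sqr ger0_norm. Qed.

Section EuclideanDistance.
Variables (R : realType) (n : nat).
Implicit Types (x z : 'rV[R]_n) (y w c : R) (p q s : 'rV[R]_n * R).

Definition dotv x z := \sum_(i < n) x ord0 i * z ord0 i.

Lemma sqnorm_ge0 x : 0 <= sqnorm x.
Proof. by apply: sumr_ge0 => i _; rewrite sqr_ge0. Qed.

Lemma sqnorm0 : sqnorm (0 : 'rV[R]_n) = 0.
Proof. by apply: big1 => i _; rewrite mxE expr0n. Qed.

Lemma sqnormD x z : sqnorm (x + z) = sqnorm x + 2 * dotv x z + sqnorm z.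
Proof.
rewrite /sqnorm /dotv mulr_sumr -!big_split /=.
by apply: eq_bigr => i _; rewrite mxE; ring.
Qed.

Lemma sqnormZ c x : sqnorm (c *: x) = c ^+ 2 * sqnorm x.
Proof. by rewrite /sqnorm mulr_sumr; apply: eq_bigr => i _; rewrite mxE exprMn. Qed.

Lemma edist_ge0 p q : 0 <= edist p q.
Proof. exact: sqrtr_ge0. Qed.

Lemma sqr_edist p q : edist p q ^+ 2 = sqnorm (p.1 - q.1) + (p.2 - q.2) ^+ 2.
Proof. by rewrite sqr_sqrtr // addr_ge0 ?sqnorm_ge0 ?sqr_ge0. Qed.

Lemma sqr_edist0 p : edist p (0, 0) ^+ 2 = sqnorm p.1 + p.2 ^+ 2.
Proof. by rewrite sqr_edist !subr0. Qed.

Lemma edistxx p : edist p p = 0.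
Proof. by rewrite /edist !subrr sqnorm0 expr0n addr0 sqrtr0. Qed.

Lemma edist_vert x y w : edist (x, y) (x, w) = `|y - w|.
Proof. by rewrite /edist /= subrr sqnorm0 add0r sqrtr_sqr. Qed.

Lemma edist_scale x y a b :
  edist (a *: x, a * y) (b *: x, b * y) = `|a - b| * edist (x, y) (0, 0).
Proof.
rewrite /edist /= -scalerBl -mulrBl !subr0 sqnormZ exprMn -mulrDr.
by rewrite sqrtrM ?sqr_ge0 // sqrtr_sqr.
Qed.

Lemma edist_ge_last p q : `|p.2 - q.2| <= edist p q.
Proof. by rewrite -sqrtr_sqr ler_wsqrtr // lerDr sqnorm_ge0. Qed.

Lemma edist_ge_coord p q (i : 'I_n) : `|p.1 ord0 i - q.1 ord0 i| <= edist p q.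
Proof.
rewrite -sqrtr_sqr ler_wsqrtr // /sqnorm (bigD1 i) //= !mxE -addrA lerDl.
by rewrite addr_ge0 ?sqr_ge0 ?sumr_ge0 // => j _; rewrite sqr_ge0.
Qed.

Lemma cauchy_schwarz_edist0 x z y w :
  dotv x z + y * w <= edist (x, y) (0, 0) * edist (z, w) (0, 0).
Proof.
have EE_ge0 := mulr_ge0 (edist_ge0 (x, y) (0, 0)) (edist_ge0 (z, w) (0, 0)).
apply: le_trans (ler_norm _) _; rewrite -ler_sqr ?nnegrE //.
rewrite real_normK ?num_real // exprMn !sqr_edist /= !subr0.
rewrite addrC (addrC (sqnorm x)) (addrC (sqnorm z)).
by rewrite cauchy_schwarz_step ?sqnorm_ge0 ?cauchy_schwarz.
Qed.

Lemma edist_triangle p q s : edist p s <= edist p q + edist q s.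
Proof.
rewrite sqrtr_le ?addr_ge0 ?edist_ge0 //.
have -> : p.1 - s.1 = (p.1 - q.1) + (q.1 - s.1) by rewrite addrA subrK.
have -> : p.2 - s.2 = (p.2 - q.2) + (q.2 - s.2) by rewrite addrA subrK.
have := cauchy_schwarz_edist0 (p.1 - q.1) (q.1 - s.1) (p.2 - q.2) (q.2 - s.2).
have E1 := sqr_edist p q; have E2 := sqr_edist q s.
rewrite /edist /= !subr0 -/(edist p q) -/(edist q s) sqnormD.
nra.
Qed.

End EuclideanDistance.

Section DistanceToSet.
Variables (R : realType) (n : nat).
Implicit Types (x : 'rV[R]_n) (y c r : R) (p q : 'rV[R]_n * R)
  (A : set ('rV[R]_n * R)).

Lemma dist_set_le_edist p A q : A q -> dist_set p A <= edist p q.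
Proof.
move=> Aq; apply: ge_inf; last by exists q.
by exists 0 => _ [q' _ ->]; exact: edist_ge0.
Qed.

Lemma le_dist_set p A c : A !=set0 ->
  (forall q, A q -> c <= edist p q) -> c <= dist_set p A.
Proof.
move=> [q0 Aq0] c_le; apply: lb_le_inf; first by exists (edist p q0), q0.
by move=> _ [q Aq ->]; exact: c_le.
Qed.

Lemma dist_set_ge0 p A : A !=set0 -> 0 <= dist_set p A.
Proof. by move=> A0; apply: le_dist_set => // q _; exact: edist_ge0. Qed.

Lemma dist_set_eq0 p A : A p -> dist_set p A = 0.
Proof.
move=> Ap; apply/le_anti; rewrite dist_set_ge0 ?andbT; last by exists p.
by rewrite -(edistxx p) dist_set_le_edist.
Qed.

Lemma le_sqr_dist_set p A c : A !=set0 ->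
  (forall q, A q -> c <= edist p q ^+ 2) -> c <= dist_set p A ^+ 2.
Proof.
move=> A0 c_le; have [c_le0|c_gt0] := leP c 0.
  exact: le_trans c_le0 (sqr_ge0 (dist_set p A)).
rewrite -(sqr_sqrtr (ltW c_gt0)) ler_sqr ?nnegrE ?sqrtr_ge0 ?dist_set_ge0 //.
by apply: le_dist_set => // q Aq; rewrite sqrtr_le ?edist_ge0 ?c_le.
Qed.

Lemma dist_set_lipschitz p q A : A !=set0 ->
  dist_set p A <= dist_set q A + edist p q.
Proof.
move=> A0; rewrite -lerBlDr; apply: le_dist_set => // s As.
by rewrite lerBlDl (le_trans (dist_set_le_edist p As) (edist_triangle p q s)).
Qed.

Lemma continuous_dist_set_vert x A : A !=set0 ->
  continuous (fun y => dist_set (x, y) A).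
Proof.
move=> A0 y; apply/cvgrPdist_lt => e e_gt0; exists e => //= t.
rewrite /ball_ /= => yt.
have := dist_set_lipschitz (x, y) (x, t) A0.
have := dist_set_lipschitz (x, t) (x, y) A0.
rewrite !edist_vert (distrC t) ltr_norml; lra.
Qed.

Lemma cball0_neq0 r : 0 <= r -> @cball0 R n r !=set0.
Proof. by exists (0, 0); rewrite /cball0 /= edistxx. Qed.

Lemma dist_cball0 p r : 0 <= r ->
  dist_set p (cball0 r) = Num.max 0 (edist p (0, 0) - r).
Proof.
move=> r_ge0; have ball0 := cball0_neq0 r_ge0.
have [p_in|r_lt] := leP (edist p (0, 0)) r.
  by rewrite dist_set_eq0 // max_l // subr_le0.
rewrite max_r ?subr_ge0 ?(ltW r_lt) //; apply/le_anti/andP; split.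
  move: p r_lt => [x y] r_lt; set k := r / edist (x, y) (0, 0).
  have p_gt0 : 0 < edist (x, y) (0, 0) by exact: le_lt_trans r_lt.
  have kp : k * edist (x, y) (0, 0) = r by rewrite /k divfK ?gt_eqF.
  have k_ge0 : 0 <= k := divr_ge0 r_ge0 (ltW p_gt0).
  have k_le1 : k <= 1 by rewrite ler_pdivrMr // mul1r ltW.
  apply: le_trans (dist_set_le_edist (x, y) (q := (k *: x, k * y)) _) _.
    by rewrite /cball0 /= -(mul0r y) -(scale0r x) edist_scale subr0 ger0_norm // kp.
  rewrite -{1}(scale1r x) -{1}(mul1r y) edist_scale.
  by rewrite ger0_norm ?subr_ge0 // mulrBl mul1r kp.
apply: le_dist_set => // q q_in.
by rewrite lerBlDr; apply: le_trans (edist_triangle p q (0, 0)) _; rewrite lerD2l.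
Qed.

End DistanceToSet.

Section DistanceToEpigraph.
Variables (R : realType) (n : nat) (f : 'rV[R]_n -> R).

Lemma epigraph_neq0 : epigraph f !=set0.
Proof. by exists (0, f 0); rewrite /epigraph /=. Qed.

Variable x : 'rV[R]_n.
Let h y := dist_set (x, y) (epigraph f).

Lemma dist_epigraph_nonincreasing : {homo h : y1 y2 / y1 <= y2 >-> y2 <= y1}.
Proof.
move=> y1 y2 y12; apply: le_dist_set => [|[z w] fzw]; first exact: epigraph_neq0.
have lifted : epigraph f (z, w + (y2 - y1)) by rewrite /epigraph /= in fzw *; lra.
apply: le_trans (dist_set_le_edist _ lifted) _.
by rewrite /edist /= [y2 - _](_ : _ = y1 - w) //; ring.
Qed.

Lemma dist_epigraph_eq0 y : f x <= y -> h y = 0.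
Proof. exact: dist_set_eq0. Qed.

Lemma dist_epigraph_gt0 y : {for x, continuous f} -> y < f x -> 0 < h y.
Proof.
move=> f_cont y_lt; set e := (f x - y) / 2.
have e_gt0 : 0 < e by rewrite divr_gt0 // subr_gt0.
have [d d_gt0 f_near] := proj1 (nbhs_ballP _ _) (cvgr_dist_lt _ _ f_cont _ e_gt0).
apply: (@lt_le_trans _ _ (Num.min d e)); first by rewrite lt_min d_gt0.
apply: le_dist_set => [|[z w] fzw]; first exact: epigraph_neq0.
rewrite /epigraph /= in fzw; rewrite ge_min.
have [/forallP z_near|/forallPn [i]] :=
  boolP [forall i : 'I_n, `|x ord0 i - z ord0 i| < d].
  have /f_near /= fz_near : ball x d z.
    by split => // i j; rewrite (ord1 i); apply: z_near.
  have := edist_ge_last (x, y) (z, w); rewrite /= distrC.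
  have := ler_norm (f x - f z); have := ler_norm (w - y).
  by rewrite /e in fz_near *; lra.
rewrite -leNgt => d_le; apply/orP; left.
exact: le_trans d_le (edist_ge_coord (x, y) (z, w) i).
Qed.

Hypothesis f_ge0 : forall z, 0 <= f z.

Lemma dist_epigraph_ge_opp y : - y <= h y.
Proof.
apply: le_dist_set => [|[z w] fzw]; first exact: epigraph_neq0.
have := edist_ge_last (x, y) (z, w); rewrite /= distrC.
have := ler_norm (w - y); have := f_ge0 z; rewrite /epigraph /= in fzw; lra.
Qed.

(* For (z, w) in the epigraph, |(x, y) - (z, w)|^2 - y^2 = |x - z|^2 + w^2 - 2 w y
   is nonincreasing in y because w >= 0. *)
Lemma dist_epigraph_sqrB_nonincreasing y1 y2 : y1 <= y2 ->
  h y2 ^+ 2 - y2 ^+ 2 <= h y1 ^+ 2 - y1 ^+ 2.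
Proof.
move=> y12; rewrite lerBrDr; apply: le_sqr_dist_set => [|[z w] fzw].
  exact: epigraph_neq0.
have w_ge0 : 0 <= w by apply: le_trans (f_ge0 z) _.
have h2_le : h y2 ^+ 2 <= edist (x, y2) (z, w) ^+ 2.
  by rewrite ler_sqr ?nnegrE ?dist_set_ge0 ?edist_ge0 ?dist_set_le_edist //;
    exact: epigraph_neq0.
have : 0 <= w * (y2 - y1) by rewrite mulr_ge0 ?subr_ge0.
move: h2_le; rewrite !sqr_edist /=; nra.
Qed.

End DistanceToEpigraph.

Section EquidistantPoint.
Variables (R : realType) (n : nat) (r : R) (f : 'rV[R]_n -> R) (x : 'rV[R]_n).
Hypotheses (r_gt0 : 0 < r) (f_cont : {for x, continuous f})
  (f_ge0 : forall z, 0 <= f z) (fx_far : r ^+ 2 < sqnorm x + f x ^+ 2).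

Local Notation g y := (dist_set (x, y) (cball0 r)).
Local Notation h y := (dist_set (x, y) (epigraph f)).
Local Notation N y := (edist (x, y) (0, 0)).

Lemma equidistant_outside_ball y : g y = h y -> r < N y.
Proof.
move=> gh; have [//|N_le] := ltP r (N y).
have h0 : h y = 0 by rewrite -gh (dist_cball0 _ (ltW r_gt0)) max_l // subr_le0.
have fx_le : f x <= y.
  by rewrite leNgt; apply/negP => /(dist_epigraph_gt0 f_cont); rewrite h0 ltxx.
have : N y ^+ 2 <= r ^+ 2 by rewrite ler_sqr ?nnegrE ?edist_ge0 ?(ltW r_gt0).
have : f x ^+ 2 <= y ^+ 2 by rewrite ler_sqr ?nnegrE // (le_trans (f_ge0 x)).
by have := fx_far; rewrite sqr_edist0 /=; lra.
Qed.

Lemma equidistant_dist_epigraph y : g y = h y -> h y = N y - r.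
Proof.
move=> gh; have r_le := ltW (equidistant_outside_ball gh).
by rewrite -gh (dist_cball0 _ (ltW r_gt0)) max_r // subr_ge0.
Qed.

Lemma equidistant_same_norm u v : u <= v -> g u = h u -> g v = h v -> N u = N v.
Proof.
move=> le_uv /equidistant_dist_epigraph hu /equidistant_dist_epigraph hv.
apply/le_anti/andP; split.
  have := dist_epigraph_sqrB_nonincreasing x f_ge0 le_uv.
  rewrite hu hv !sqrrB !sqr_edist0 /= => le.
  by rewrite -(ler_pM2l r_gt0); lra.
by have := dist_epigraph_nonincreasing f x le_uv; rewrite /= hu hv lerD2r.
Qed.

Lemma equidistant_unique y1 y2 : g y1 = h y1 -> g y2 = h y2 -> y1 = y2.
Proof.
suff no_two u v : u < v -> g u = h u -> g v = h v -> False.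
  move=> e1 e2; have [lt12|lt21|//] := ltgtP y1 y2.
    by case: (no_two _ _ lt12 e1 e2).
  by case: (no_two _ _ lt21 e2 e1).
move=> lt_uv eu ev; have Nuv := equidistant_same_norm (ltW lt_uv) eu ev.
have huv : h u = h v.
  by rewrite (equidistant_dist_epigraph eu) (equidistant_dist_epigraph ev) Nuv.
have u_opp : u = - v.
  have /eqP : u ^+ 2 = v ^+ 2.
    by have := sqr_edist0 (x, u); rewrite Nuv sqr_edist0 /= => /addrI.
  by rewrite eqf_sqr => /orP [/eqP uv|/eqP //]; move: lt_uv; rewrite uv ltxx.
have u_lt0 : u < 0 by lra.
have hv_le : h v <= h 0 by apply: dist_epigraph_nonincreasing; lra.
have hv2_le : h v ^+ 2 <= h 0 ^+ 2.
  by rewrite ler_sqr ?nnegrE ?dist_set_ge0 //; exact: epigraph_neq0.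
have := dist_epigraph_sqrB_nonincreasing x f_ge0 (ltW u_lt0).
rewrite huv expr0n subr0 /= => key.
have u2_gt0 : 0 < u ^+ 2 by rewrite lt_def sqr_ge0 sqrf_eq0 ltr0_neq0.
suff : (0 : R) < 0 by rewrite ltxx.
by lra.
Qed.

Lemma equidistant_exists : exists y, g y = h y.
Proof.
pose y0 := - (sqnorm x / r).
have ry0 : r * y0 = - sqnorm x by rewrite /y0 mulrN mulrC divfK ?gt_eqF.
have y0_le0 : y0 <= 0 by rewrite oppr_le0 divr_ge0 ?sqnorm_ge0 ?(ltW r_gt0).
have g_le_h : g y0 <= h y0.
  apply: le_trans (dist_epigraph_ge_opp x f_ge0 y0).
  rewrite (dist_cball0 _ (ltW r_gt0)) ge_max oppr_ge0 y0_le0 /= lerBlDr.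
  have y0r_ge0 : 0 <= - y0 + r by rewrite addr_ge0 ?oppr_ge0 ?(ltW r_gt0).
  rewrite -ler_sqr ?nnegrE ?edist_ge0 // sqr_edist0 /=.
  by have := sqnorm_ge0 x; have := sqr_ge0 r; move: ry0; lra.
have h_lt_g : h (f x) < g (f x).
  rewrite dist_epigraph_eq0 // (dist_cball0 _ (ltW r_gt0)) lt_max subr_gt0 orbC.
  rewrite -ltr_sqr ?nnegrE ?edist_ge0 ?(ltW r_gt0) // sqr_edist0 /=.
  by rewrite fx_far.
have h_cont := continuous_dist_set_vert (x := x) (epigraph_neq0 f).
have g_cont := continuous_dist_set_vert (x := x) (cball0_neq0 n (ltW r_gt0)).
have cont : continuous (fun y => h y - g y).
  by move=> y; exact: continuousB (@h_cont y) (@g_cont y).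
have y0_le : y0 <= f x by apply: le_trans y0_le0 (f_ge0 x).
have [|y _ /= /subr0_eq hg] := IVT y0_le (continuous_subspaceT cont) (v := 0).
  by rewrite ge_min le_max; apply/andP; split; apply/orP; [right|left]; lra.
by exists y.
Qed.

End EquidistantPoint.

Unset Implicit Arguments.

Theorem lemma2 (R : realType) (n : nat) (r : R) (f : 'rV[R]_n -> R) :
  (1 <= n)%N -> 0 < r -> continuous f -> (forall x, 0 < f x) ->
  (forall x, r ^+ 2 < sqnorm x + f x ^+ 2) ->
  forall x : 'rV[R]_n, exists! y : R,
    dist_set (x, y) (cball0 r) = dist_set (x, y) (epigraph f).
Proof.
move=> _ r_gt0 f_cont f_gt0 f_far x.
have f_ge0 z : 0 <= f z := ltW (f_gt0 z).
have [y equi] := equidistant_exists r_gt0 f_ge0 (f_far x).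
exists y; split=> // y' equi'.
exact: equidistant_unique r_gt0 (f_cont x) f_ge0 (f_far x) _ _ equi equi'.
Qed.
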